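(* Let $G=(V,q)$ be a reversible connected graph and let $x_0\neq y_0\in V$. Then there exists an optimal transport plan $\rho$ from $x_0$ to $y_0$ such that (1) $\mu_\rho(k)=0$ for all integers $k$ with $|k|>1$, and (2) $\mu_\rho(-1)\ge 2q_{\min}$. Moreover, every optimal transport plan $\rho$ from a vertex $x_0$ to itself satisfies $\mu_\rho(k)=0$ for all $k\neq 0$.
   Context: A graph $G=(V,q)$ consists of a countable set $V$ and a function $q:V\times V\to[0,\infty)$ such that $\#\{y:q(x,y)>0\}<\infty$ for every $x\in V$. $G$ is reversible if there is $m:V\to(0,\infty)$ with $q(x,y)m(x)=q(y,x)m(y)$ for all $x,y$. For reversible $G$ write $x\sim y$ if $q(x,y)>0$, and let $d$ be the combinatorial distance $d(x,y)=\inf\{n: x=x_0\sim x_1\sim\dots\sim x_n=y\}$; connected means $d$ is finite. $q_{\min}:=\inf\{q(x,y): q(x,y)>0\}$. A transport plan from $x_0$ to $y_0$ is a map $\rho:V\times V\to[0,\infty)$ with $\sum_{y}\rho(x,y)=q(x_0,x)$ for all $x\neq x_0$ and $\sum_x\rho(x,y)=q(y_0,y)$ for all $y\ne y_0$. Its cost is $\mathrm{cost}(\rho)=\sum_{x,y}\rho(x,y)\big(d(x_0,y_0)-d(x,y)\big)$, and for $k\in\mathbb Z$, $\mu_\rho(k)=\sum_{x,y:\ d(x,y)-d(x_0,y_0)=k}\rho(x,y)$. A transport plan from $x_0$ to $y_0$ is optimal if it maximizes the cost among all transport plans from $x_0$ to $y_0$. *)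

From Stdlib Require Import Reals ZArith List Classical ClassicalEpsilon.
Import ListNotations.
Open Scope R_scope.

(* Unconditional (unordered) sum of a family f : A -> R over an arbitrary
   (countable) index type A: the net of finite partial sums over finite
   subsets (NoDup lists) converges to s. *)
Definition finsum {A : Type} (f : A -> R) (l : list A) : R :=
  fold_right (fun a acc => f a + acc) 0 l.

Definition HasSum {A : Type} (f : A -> R) (s : R) : Prop :=
  forall eps, 0 < eps ->
    exists l0 : list A, forall l : list A,
      NoDup l -> incl l0 l -> Rabs (finsum f l - s) < eps.

Inductive walk {V : Type} (q : V -> V -> R) : V -> V -> nat -> Prop :=
| walk0 : forall x, walk q x x 0
| walkS : forall x z y n, 0 < q x z -> walk q z y n -> walk q x y (S n).

Definition is_dist {V : Type} (q : V -> V -> R) (x y : V) (n : nat) : Prop :=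
  walk q x y n /\ forall m, walk q x y m -> (n <= m)%nat.

(* Combinatorial distance (meaningful on connected graphs). *)
Definition dist {V : Type} (q : V -> V -> R) (x y : V) : nat :=
  epsilon (inhabits 0%nat) (fun n => is_dist q x y n).

Definition connected {V : Type} (q : V -> V -> R) : Prop :=
  forall x y : V, exists n, walk q x y n.

Definition reversible {V : Type} (q : V -> V -> R) : Prop :=
  exists m : V -> R, (forall x, 0 < m x) /\
    (forall x y, q x y * m x = q y x * m y).

Definition is_glb (E : R -> Prop) (m : R) : Prop :=
  (forall r, E r -> m <= r) /\ (forall b, (forall r, E r -> b <= r) -> b <= m).

Definition qmin {V : Type} (q : V -> V -> R) : R :=
  epsilon (inhabits 0) (is_glb (fun r => exists x y, 0 < q x y /\ r = q x y)).

Definition transport_plan {V : Type} (q : V -> V -> R) (x0 y0 : V)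
  (rho : V -> V -> R) : Prop :=
  (forall x y, 0 <= rho x y) /\
  (forall x, x <> x0 -> HasSum (fun y => rho x y) (q x0 x)) /\
  (forall y, y <> y0 -> HasSum (fun x => rho x y) (q y0 y)).

Definition cost_family {V : Type} (q : V -> V -> R) (x0 y0 : V)
  (rho : V -> V -> R) : V * V -> R :=
  fun p => rho (fst p) (snd p) *
           (INR (dist q x0 y0) - INR (dist q (fst p) (snd p))).

Definition mu_family {V : Type} (q : V -> V -> R) (x0 y0 : V)
  (rho : V -> V -> R) (k : Z) : V * V -> R :=
  fun p => if Z.eq_dec (Z.of_nat (dist q (fst p) (snd p))
                         - Z.of_nat (dist q x0 y0))%Z k
           then rho (fst p) (snd p) else 0.

Definition optimal_plan {V : Type} (q : V -> V -> R) (x0 y0 : V)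
  (rho : V -> V -> R) : Prop :=
  transport_plan q x0 y0 rho /\
  exists c, HasSum (cost_family q x0 y0 rho) c /\
    forall rho' c', transport_plan q x0 y0 rho' ->
      HasSum (cost_family q x0 y0 rho') c' -> c' <= c.

(* Every transport plan from x0 to y0 is supported on
   the finite set (x0 :: N(x0)) x (y0 :: N(y0)), N(v) being the neighbours
   of v, and its cost splits as a constant plus the sum over the pairs
   (x,y) in N(x0) x N(y0) of rho(x,y) times the "swap gain"
   (d(x,y0) + d(x0,y)) - (d(x0,y0) + d(x,y)) of sending the mass x -> y
   directly instead of along x -> y0 and x0 -> y.  Only "profitable" pairs
   (positive swap gain) are worth using, so optimising the cost amounts to a
   bounded linear program in the masses on profitable pairs; it has a
   maximiser by compactness (extreme value theorem of MathComp-Analysis).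
   Completing such a maximiser by sending the remaining marginal mass to y0
   and from x0 gives an optimal plan which only moves mass between pairs
   whose distance differs from d(x0,y0) by at most one.  A neighbour x1 of
   x0 on a geodesic to y0 is in no profitable pair, so its whole mass
   q(x0,x1) is sent to y0 at distance d(x0,y0) - 1, and symmetrically for a
   neighbour y1 of y0: hence mu(-1) >= q(x0,x1) + q(y0,y1) >= 2 q_min.
   For x0 = y0 the diagonal plan has cost 0 while every plan has cost <= 0,
   so an optimal plan has no mass off the diagonal. *)

From Stdlib Require Import Reals ZArith List Lia Lra Classical ClassicalEpsilon.
From mathcomp Require all_boot all_algebra all_classical all_reals all_analysis
  Rstruct Rstruct_topology.
Import ListNotations.
Open Scope R_scope.

(** * Finite sums over lists *)

Definition deq {A : Type} (a b : A) : {a = b} + {a <> b} :=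
  excluded_middle_informative (a = b).

Lemma finsum_map {A B : Type} (f : B -> R) (g : A -> B) l :
  finsum f (map g l) = finsum (fun a => f (g a)) l.
Proof. induction l; simpl; [lra | rewrite IHl; lra]. Qed.

Section FiniteSums.
Context {A : Type}.

Lemma finsum_app (f : A -> R) l1 l2 :
  finsum f (l1 ++ l2) = finsum f l1 + finsum f l2.
Proof. induction l1; simpl; [lra | rewrite IHl1; lra]. Qed.

Lemma finsum_ext (f g : A -> R) l :
  (forall a, In a l -> f a = g a) -> finsum f l = finsum g l.
Proof. induction l; simpl; intros H; [lra |]. rewrite H, IHl; auto. Qed.

Lemma finsum_le (f g : A -> R) l :
  (forall a, In a l -> f a <= g a) -> finsum f l <= finsum g l.
Proof.
  induction l; simpl; intros H; [lra |].
  assert (f a <= g a) by auto. assert (finsum f l <= finsum g l) by auto. lra.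
Qed.

Lemma finsum_plus (f g : A -> R) l :
  finsum (fun a => f a + g a) l = finsum f l + finsum g l.
Proof. induction l; simpl; [lra | rewrite IHl; lra]. Qed.

Lemma finsum_minus (f g : A -> R) l :
  finsum (fun a => f a - g a) l = finsum f l - finsum g l.
Proof. induction l; simpl; [lra | rewrite IHl; lra]. Qed.

Lemma finsum_opp (f : A -> R) l : finsum (fun a => - f a) l = - finsum f l.
Proof. induction l; simpl; [lra | rewrite IHl; lra]. Qed.

Lemma finsum_scal_r (f : A -> R) c l :
  finsum (fun a => f a * c) l = finsum f l * c.
Proof. induction l; simpl; [lra | rewrite IHl; lra]. Qed.

Lemma finsum_zero (f : A -> R) l : (forall a, In a l -> f a = 0) -> finsum f l = 0.
Proof. induction l; simpl; intros H; [lra |]. rewrite H, IHl; auto; lra. Qed.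

Lemma finsum_nonneg (f : A -> R) l : (forall a, In a l -> 0 <= f a) -> 0 <= finsum f l.
Proof.
  intros H. rewrite <- (finsum_zero (fun _ => 0) l) by auto. apply finsum_le; auto.
Qed.

Lemma finsum_same_support (f : A -> R) l1 l2 : NoDup l1 -> NoDup l2 ->
  (forall a, f a <> 0 -> (In a l1 <-> In a l2)) -> finsum f l1 = finsum f l2.
Proof.
  revert l2. induction l1 as [|a l1 IH]; intros l2 N1 N2 H; simpl.
  - symmetry; apply finsum_zero. intros b Hb.
    destruct (Req_dec (f b) 0) as [|Hne]; auto. destruct (proj2 (H b Hne) Hb).
  - inversion N1 as [|? ? Ha1 N1']; subst.
    destruct (classic (In a l2)) as [Ha | Ha].
    + destruct (in_split a l2 Ha) as [u [v ->]].
      assert (Hav : ~ In a (u ++ v)) by exact (NoDup_remove_2 _ _ _ N2).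
      rewrite finsum_app; simpl.
      rewrite (IH (u ++ v)), finsum_app; [lra | auto | eapply NoDup_remove_1; eauto |].
      intros b Hb. specialize (H b Hb). rewrite !in_app_iff in *. simpl in H.
      split; intros Hb2.
      * assert (b <> a) by (intro; subst; auto).
        destruct (proj1 H (or_intror Hb2)) as [| [|]]; auto; congruence.
      * assert (b <> a) by (intro; subst; auto).
        destruct (proj2 H (ltac:(destruct Hb2; auto))); auto; congruence.
    + assert (Hfa : f a = 0).
      { destruct (Req_dec (f a) 0) as [|Hne]; auto.
        exfalso. apply Ha, (H a Hne); simpl; auto. }
      rewrite Hfa, (IH l2); auto; [lra |].
      intros b Hb. specialize (H b Hb). simpl in H. split; intros Hb2.
      * apply H; auto.
      * destruct (proj2 H Hb2); auto. subst. congruence.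
Qed.

Lemma finsum_ge_term (f : A -> R) l a : NoDup l -> In a l ->
  (forall b, In b l -> b <> a -> 0 <= f b) -> f a <= finsum f l.
Proof.
  intros N Ha H. destruct (in_split a l Ha) as [u [v ->]].
  assert (Hav : ~ In a (u ++ v)) by exact (NoDup_remove_2 _ _ _ N).
  rewrite finsum_app; simpl.
  assert (0 <= finsum f u).
  { apply finsum_nonneg. intros b Hb. apply H; [apply in_app_iff; auto |].
    intro; subst. apply Hav, in_app_iff; auto. }
  assert (0 <= finsum f v).
  { apply finsum_nonneg. intros b Hb. apply H; [apply in_app_iff; simpl; auto |].
    intro; subst. apply Hav, in_app_iff; auto. }
  lra.
Qed.

Lemma finsum_ge_two (f : A -> R) l a b : NoDup l -> In a l -> In b l -> a <> b ->
  (forall c, In c l -> 0 <= f c) -> f a + f b <= finsum f l.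
Proof.
  intros N Ha Hb Hab H. destruct (in_split a l Ha) as [u [v ->]].
  rewrite finsum_app; simpl.
  assert (Hb' : In b (u ++ v)).
  { rewrite in_app_iff in *. simpl in Hb. destruct Hb as [| [|]]; auto; congruence. }
  assert (Hle : f b <= finsum f (u ++ v)).
  { apply finsum_ge_term; [exact (NoDup_remove_1 _ _ _ N) | auto |].
    intros c Hc _. apply H. rewrite in_app_iff in *; simpl; destruct Hc; auto. }
  rewrite finsum_app in Hle.
  assert (0 <= f a) by (apply H; rewrite in_app_iff; simpl; auto). lra.
Qed.

Lemma finsum_nth (L : list A) d0 (f : A -> R) :
  finsum f L = finsum (fun i => f (nth i L d0)) (seq 0 (length L)).
Proof.
  assert (HL : L = map (fun i => nth i L d0) (seq 0 (length L))).
  { induction L as [|a L IH]; simpl; auto. f_equal.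
    rewrite <- seq_shift, map_map. exact IH. }
  rewrite HL at 1. apply finsum_map.
Qed.

End FiniteSums.

Lemma finsum_prod {A B : Type} (f : A * B -> R) l1 l2 :
  finsum f (list_prod l1 l2) = finsum (fun a => finsum (fun b => f (a, b)) l2) l1.
Proof. induction l1; simpl; [lra |]. rewrite finsum_app, finsum_map, IHl1. lra. Qed.

Lemma finsum_comm {A B : Type} (f : A -> B -> R) l1 l2 :
  finsum (fun a => finsum (fun b => f a b) l2) l1 =
  finsum (fun b => finsum (fun a => f a b) l1) l2.
Proof.
  induction l1; simpl.
  - symmetry; apply finsum_zero; auto.
  - rewrite IHl1, <- finsum_plus. reflexivity.
Qed.

Lemma NoDup_prod {A B : Type} (l1 : list A) (l2 : list B) :
  NoDup l1 -> NoDup l2 -> NoDup (list_prod l1 l2).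
Proof.
  induction l1 as [|a l1 IH]; intros N1 N2; simpl; [constructor |].
  inversion N1; subst. apply NoDup_app; auto.
  - apply NoDup_map_NoDup_ForallPairs; auto. intros x y _ _ H; inversion H; auto.
  - intros p Hp Hp2. apply in_map_iff in Hp. destruct Hp as [b [<- _]].
    apply in_prod_iff in Hp2. destruct Hp2; auto.
Qed.

(** * Unconditional sums *)

Section UnconditionalSums.
Context {A : Type}.

Lemma nodup_ex (l : list A) : exists l', NoDup l' /\ forall a, In a l' <-> In a l.
Proof. exists (nodup deq l). split; [apply NoDup_nodup | intros; apply nodup_In]. Qed.

Lemma HasSum_finsum (f : A -> R) l : NoDup l -> (forall a, ~ In a l -> f a = 0) ->
  HasSum f (finsum f l).
Proof.
  intros N H eps Heps. exists l. intros l' N' I.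
  rewrite (finsum_same_support f l' l); auto.
  - rewrite Rminus_diag, Rabs_R0; auto.
  - intros a Ha. split; auto. intro. destruct (classic (In a l)); auto. exfalso; auto.
Qed.

Lemma HasSum_zero (f : A -> R) : (forall a, f a = 0) -> HasSum f 0.
Proof. intros H. change 0 with (finsum f []). apply HasSum_finsum; auto. constructor. Qed.

Lemma HasSum_unique (f : A -> R) s t : HasSum f s -> HasSum f t -> s = t.
Proof.
  intros Hs Ht. destruct (Req_dec s t) as [|Hne]; auto. exfalso.
  set (e := Rabs (s - t) / 2).
  assert (He : 0 < e) by (assert (0 < Rabs (s - t)) by (apply Rabs_pos_lt; lra); unfold e; lra).
  destruct (Hs e He) as [l1 H1]. destruct (Ht e He) as [l2 H2].
  destruct (nodup_ex (l1 ++ l2)) as [l [N Hl]].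
  specialize (H1 l N (fun a Ha => proj2 (Hl a) (in_or_app _ _ _ (or_introl Ha)))).
  specialize (H2 l N (fun a Ha => proj2 (Hl a) (in_or_app _ _ _ (or_intror Ha)))).
  assert (Rabs (s - t) <= Rabs (finsum f l - t) + Rabs (finsum f l - s)).
  { replace (s - t) with ((finsum f l - t) - (finsum f l - s)) by ring.
    eapply Rle_trans; [apply Rabs_triang |]. rewrite Rabs_Ropp. lra. }
  unfold e in *. lra.
Qed.

Lemma HasSum_finsum_eq (f : A -> R) l s : NoDup l -> (forall a, ~ In a l -> f a = 0) ->
  HasSum f s -> s = finsum f l.
Proof. intros N H Hs. eapply HasSum_unique; eauto. apply HasSum_finsum; auto. Qed.

Lemma HasSum_opp (f : A -> R) s : HasSum f s -> HasSum (fun a => - f a) (- s).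
Proof.
  intros Hs eps Heps. destruct (Hs eps Heps) as [l0 H0]. exists l0. intros l N I.
  rewrite finsum_opp. replace (- finsum f l - - s) with (- (finsum f l - s)) by ring.
  rewrite Rabs_Ropp. auto.
Qed.

Lemma HasSum_term_le (f : A -> R) s a : HasSum f s -> (forall b, 0 <= f b) -> f a <= s.
Proof.
  intros Hs Hp. apply Rnot_lt_le. intro Hlt.
  destruct (Hs (f a - s)) as [l0 H0]; [lra |].
  destruct (nodup_ex (a :: l0)) as [l [N Hl]].
  specialize (H0 l N (fun b Hb => proj2 (Hl b) (or_intror Hb))).
  assert (f a <= finsum f l) by (apply finsum_ge_term; auto; apply Hl; simpl; auto).
  apply Rabs_def2 in H0. lra.
Qed.

Lemma HasSum_le_term (f : A -> R) s a : HasSum f s -> (forall b, f b <= 0) -> s <= f a.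
Proof.
  intros Hs Hp.
  assert (H := HasSum_term_le _ _ a (HasSum_opp f s Hs) (fun b => Ropp_0_ge_le_contravar _ (Rle_ge _ _ (Hp b)))).
  lra.
Qed.

End UnconditionalSums.

(** * Bounded linear programs have maximisers *)

Definition lp_feasible (n m : nat) (B : R) (a : nat -> nat -> R) (b v : nat -> R) : Prop :=
  (forall i, In i (seq 0 n) -> 0 <= v i <= B) /\
  (forall j, In j (seq 0 m) -> finsum (fun i => a j i * v i) (seq 0 n) <= b j).

(* The feasible set of such a system is a compact subset of R^n, so the
   extreme value theorem of MathComp-Analysis yields a maximiser of any
   linear objective as soon as the system is feasible. *)
Module CompactLP.
Import all_boot all_algebra all_classical all_reals all_analysis.
Import Rstruct Rstruct_topology numFieldNormedType.Exports.
Local Open Scope classical_set_scope.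
Local Open Scope ring_scope.

Lemma finsum_big (g : nat -> R) n : finsum g (List.seq 0 n) = \sum_(i < n) g i.
Proof.
have -> : List.seq 0 n = iota 0 n by elim: n 0%N => //= n IH s; rewrite IH.
rewrite -(big_mkord xpredT) /index_iota subn0.
by elim: (iota 0 n) => [|x l IH]; rewrite ?big_nil ?big_cons //= IH.
Qed.

Lemma in_seq0 i n : In i (List.seq 0 n) <-> (i < n)%N.
Proof.
rewrite in_seq; split => [[_ H]|H]; first by apply/ssrnat.ltP; lia.
by move/ssrnat.ltP: H => H; lia.
Qed.

Lemma linear_continuous n (g : 'I_n -> R) :
  continuous (fun r : 'rV[R]_n => \sum_(i < n) g i * r ord0 i).
Proof.
apply: continuous_big; first exact: (@add_continuous R^o).
move=> i _ x; apply: continuousM; first exact: cst_continuous.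
exact: coord_continuous.
Qed.

Lemma lp_max_rV n m (B : R) (a : 'I_m -> 'I_n -> R) (b : 'I_m -> R)
    (c : 'I_n -> R) (r0 : 'rV[R]_n) :
  let K := [set r : 'rV[R]_n | (forall i, `[0, B]%classic (r ord0 i)) /\
             forall j, \sum_(i < n) a j i * r ord0 i <= b j] in
  K r0 -> exists2 r, K r & forall t, K t ->
     \sum_(i < n) c i * t ord0 i <= \sum_(i < n) c i * r ord0 i.
Proof.
move=> K Kr0.
have -> : K = [set r : 'rV[R]_n | forall i, `[0, B]%classic (r ord0 i)] `&`
    \bigcap_(j in setT) [set r : 'rV[R]_n | \sum_(i < n) a j i * r ord0 i <= b j].
  by apply/seteqP; split => r /= [H1 H2]; split => // j; [move=> _|]; apply: H2.
have cK : compact ([set r : 'rV[R]_n | forall i, `[0, B]%classic (r ord0 i)] `&`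
    \bigcap_(j in setT) [set r : 'rV[R]_n | \sum_(i < n) a j i * r ord0 i <= b j]).
  apply: compact_closedI.
    by apply: (@rV_compact _ _ (fun=> `[0, B]%classic)) => i; exact: segment_compact.
  apply: closed_bigI => j _.
  apply: (@preimage_closed _ _ (fun r : 'rV[R]_n => \sum_(i < n) a j i * r ord0 i)
     [set x | x <= b j]); last exact: closed_le.
  by move=> x _; apply: linear_continuous.
have [r rK rmax] := EVT_max_rV (ex_intro _ r0 (conj (proj1 Kr0) (fun j _ => proj2 Kr0 j))) cK
  (continuous_subspaceT (@linear_continuous n c)).
by exists r => [|t tK]; [move: rK | apply: rmax]; rewrite inE.
Qed.

Local Open Scope R_scope.

Lemma lp_max n m B (a : nat -> nat -> R) (b c v0 : nat -> R) :
  lp_feasible n m B a b v0 -> exists v, lp_feasible n m B a b v /\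
   forall w, lp_feasible n m B a b w ->
     finsum (fun i => c i * w i) (List.seq 0 n) <= finsum (fun i => c i * v i) (List.seq 0 n).
Proof.
move=> Hv0.
pose rw := fun w : nat -> R => (\row_(i < n) w i : 'rV[R]_n).
have Hs g w : finsum (fun i => g i * w i) (List.seq 0 n) = (\sum_(i < n) g i * (rw w) ord0 i)%R.
  by rewrite finsum_big; apply: eq_bigr => i _; rewrite mxE.
have Kw w : lp_feasible n m B a b w ->
   (forall i : 'I_n, `[0, B]%classic ((rw w) ord0 i)) /\
    forall j : 'I_m, (\sum_(i < n) a j i * (rw w) ord0 i <= b j)%R.
  move=> [H1 H2]; split => [i|j].
    rewrite /= mxE in_itv /=.
    have [Ha Hb] := H1 _ (proj2 (in_seq0 _ _) (ltn_ord i)).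
    by apply/andP; split; apply/RleP.
  by rewrite -Hs; apply/RleP; apply: H2; apply/in_seq0; exact: ltn_ord.
have [r [rK1 rK2] rmax] := @lp_max_rV n m B (fun (j : 'I_m) (i : 'I_n) => a j i)
   (fun j : 'I_m => b j) (fun i : 'I_n => c i) (rw v0) (Kw v0 Hv0).
pose v := fun i : nat => oapp (fun k : 'I_n => r ord0 k) 0 (insub i).
have Hv (i : 'I_n) : v i = r ord0 i by rewrite /v valK.
have Hrv g : finsum (fun i => g i * v i) (List.seq 0 n) = (\sum_(i < n) g i * r ord0 i)%R.
  by rewrite finsum_big; apply: eq_bigr => i _; rewrite Hv.
exists v; split; last by move=> w Hw; rewrite Hs Hrv; apply/RleP; apply: rmax; exact: Kw.
split=> [i /in_seq0 Hi | j /in_seq0 Hj]; last by rewrite Hrv; apply/RleP; exact: (rK2 (Ordinal Hj)).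
have := rK1 (Ordinal Hi); rewrite /= in_itv /= -(Hv (Ordinal Hi)) /=.
by case/andP => /RleP H1 /RleP H2.
Qed.

End CompactLP.

Definition lin_feasible {A : Type} (L : list A) (B : R) (C : list ((A -> R) * R))
  (z : A -> R) : Prop :=
  (forall a, In a L -> 0 <= z a <= B) /\
  (forall p, In p C -> finsum (fun a => fst p a * z a) L <= snd p).

Lemma lp_max_list {A : Type} (L : list A) (d0 : A) (NL : NoDup L) (B : R)
  (C : list ((A -> R) * R)) (c z0 : A -> R) :
  lin_feasible L B C z0 -> exists z, lin_feasible L B C z /\
    forall w, lin_feasible L B C w ->
      finsum (fun a => c a * w a) L <= finsum (fun a => c a * z a) L.
Proof.
  intros H0.
  set (n := length L). set (dC := ((fun _ : A => 0), 0)).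
  set (a := fun j i => fst (nth j C dC) (nth i L d0)).
  set (b := fun j => snd (nth j C dC)).
  set (coords := fun (w : A -> R) i => w (nth i L d0)).
  assert (Hcoords : forall w, lin_feasible L B C w -> lp_feasible n (length C) B a b (coords w)).
  { intros w [W1 W2]. split.
    - intros i Hi. apply W1, nth_In. apply in_seq in Hi. unfold n in Hi. lia.
    - intros j Hj. apply in_seq in Hj. unfold a, b, coords, n.
      rewrite <- (finsum_nth L d0 (fun x => fst (nth j C dC) x * w x)).
      apply W2, nth_In. lia. }
  destruct (CompactLP.lp_max n (length C) B a b (fun i => c (nth i L d0)) (coords z0)
              (Hcoords z0 H0)) as [v [Hv Hopt]].
  (* the point of A^L with coordinates v *)
  set (z := fun x => finsum (fun i => if deq (nth i L d0) x then v i else 0) (seq 0 n)).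
  assert (Hz : forall i, In i (seq 0 n) -> z (nth i L d0) = v i).
  { intros i Hi. unfold z.
    rewrite (finsum_same_support _ (seq 0 n) [i]); [| apply seq_NoDup | repeat constructor; intros [] |].
    - simpl. destruct (deq _ _); [lra | congruence].
    - intros j Hj. destruct (deq (nth j L d0) (nth i L d0)) as [E | E]; [| congruence].
      split; intros Hj2; [left | destruct Hj2 as [<- | []]; auto].
      apply in_seq in Hi. apply in_seq in Hj2. unfold n in *.
      apply (proj1 (NoDup_nth L d0) NL); [lia | lia | congruence]. }
  assert (Hsum : forall g, finsum (fun x => g x * z x) L =
                           finsum (fun i => g (nth i L d0) * v i) (seq 0 n)).
  { intros g. rewrite (finsum_nth L d0). apply finsum_ext. intros i Hi. rewrite Hz; auto. }
  exists z. split; [split |].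
  - intros x Hx. destruct (In_nth L x d0 Hx) as [i [Hi <-]].
    rewrite Hz by (apply in_seq; unfold n; lia).
    apply (proj1 Hv), in_seq. unfold n; lia.
  - intros p Hp. destruct (In_nth C p dC Hp) as [j [Hj <-]].
    rewrite Hsum. apply (proj2 Hv), in_seq. lia.
  - intros w Hw. rewrite Hsum, (finsum_nth L d0 (fun x => c x * w x)).
    exact (Hopt _ (Hcoords w Hw)).
Qed.

(** * Combinatorial distance *)

Lemma walk_app {V : Type} (q : V -> V -> R) x y z n m :
  walk q x y n -> walk q y z m -> walk q x z (n + m).
Proof. induction 1; intros Hw; simpl; auto. econstructor; eauto. Qed.

Lemma least_nat (P : nat -> Prop) :
  (exists n, P n) -> exists n, P n /\ forall m, P m -> (n <= m)%nat.
Proof.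
  intros [n Hn]. revert Hn. induction n as [n IH] using (well_founded_induction lt_wf).
  intros Hn. destruct (classic (exists m, P m /\ (m < n)%nat)) as [[m [Hm Hlt]] | Hno].
  - exact (IH m Hlt Hm).
  - exists n. split; auto. intros m Hm. destruct (le_lt_dec n m); auto. exfalso; eauto.
Qed.

Section Distance.
Context {V : Type} (q : V -> V -> R) (Hconn : connected q).

Lemma dist_is_dist x y : is_dist q x y (dist q x y).
Proof. unfold dist. apply epsilon_spec, least_nat, Hconn. Qed.

Lemma dist_walk x y : walk q x y (dist q x y).
Proof. apply dist_is_dist. Qed.

Lemma dist_min x y n : walk q x y n -> (dist q x y <= n)%nat.
Proof. apply dist_is_dist. Qed.

Lemma dist_refl x : dist q x x = 0%nat.
Proof. assert (H := dist_min x x 0 (walk0 q x)). lia. Qed.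

Lemma dist_eq0 x y : dist q x y = 0%nat -> x = y.
Proof. intros H. assert (W := dist_walk x y). rewrite H in W. inversion W; auto. Qed.

Lemma dist_tri x y z : (dist q x z <= dist q x y + dist q y z)%nat.
Proof. apply dist_min. apply walk_app with y; apply dist_walk. Qed.

Lemma dist_edge x y : 0 < q x y -> (dist q x y <= 1)%nat.
Proof. intros H. apply dist_min. econstructor; eauto. constructor. Qed.

Lemma dist_step x y k : dist q x y = S k -> exists z, 0 < q x z /\ dist q z y = k.
Proof.
  intros H. assert (W := dist_walk x y). rewrite H in W.
  inversion W as [| x' z y' n' Hxz Wz]; subst.
  exists z. split; auto.
  assert (A1 := dist_min _ _ _ Wz).
  assert (A2 := dist_tri x z y). assert (A3 := dist_edge x z Hxz). lia.
Qed.

Context (Hq : forall x y, 0 <= q x y) (Hrev : reversible q).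

Lemma rev_pos x y : 0 < q x y -> 0 < q y x.
Proof.
  intros H. destruct Hrev as [m [Hm Hs]].
  assert (Hpos : 0 < q x y * m x) by (apply Rmult_lt_0_compat; auto).
  rewrite Hs in Hpos. destruct (Rle_lt_dec (q y x) 0); auto.
  assert (q y x = 0) by (specialize (Hq y x); lra). nra.
Qed.

Lemma walk_rev x y n : walk q x y n -> walk q y x n.
Proof.
  induction 1; [constructor |].
  replace (S n) with (n + 1)%nat by lia. apply walk_app with z; auto.
  econstructor; [apply rev_pos; eauto | constructor].
Qed.

Lemma dist_sym x y : dist q x y = dist q y x.
Proof.
  assert (H1 := dist_min x y _ (walk_rev _ _ _ (dist_walk y x))).
  assert (H2 := dist_min y x _ (walk_rev _ _ _ (dist_walk x y))). lia.
Qed.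

End Distance.

Lemma qmin_le {V : Type} (q : V -> V -> R) x y : 0 < q x y -> qmin q <= q x y.
Proof.
  intros Hxy.
  set (E := fun r => exists x y, 0 < q x y /\ r = q x y).
  assert (Ex : exists m, is_glb E m).
  { set (E' := fun r => E (- r)).
    assert (Hb : bound E') by (exists 0; intros r [a [b [Hab Hr]]]; lra).
    assert (Hne : exists r, E' r) by (exists (- q x y); exists x, y; split; auto; ring).
    destruct (completeness E' Hb Hne) as [m [Hm1 Hm2]].
    exists (- m). split.
    - intros r Hr. assert (E' (- r)) by (unfold E'; rewrite Ropp_involutive; auto).
      specialize (Hm1 _ H). lra.
    - intros b Hb'. assert (m <= - b) by (apply Hm2; intros r Hr; specialize (Hb' _ Hr); lra). lra. }
  apply (epsilon_spec (inhabits 0) (is_glb E) Ex). exists x, y; auto.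
Qed.

Lemma neighbour_list {V : Type} (q : V -> V -> R)
  (Hfin : forall x, exists l : list V, forall y, 0 < q x y -> In y l) x0 :
  exists L, NoDup L /\ forall x, In x L <-> 0 < q x0 x /\ x <> x0.
Proof.
  destruct (Hfin x0) as [l Hl].
  set (P := fun x => if excluded_middle_informative (0 < q x0 x /\ x <> x0) then true else false).
  exists (nodup deq (filter P l)). split; [apply NoDup_nodup |].
  intros x. rewrite nodup_In, filter_In. unfold P.
  destruct (excluded_middle_informative _) as [H | H]; split; intros H'.
  - auto.
  - split; [apply Hl; tauto | auto].
  - destruct H'; discriminate.
  - tauto.
Qed.

(** * Two vertices x0 <> y0: reduction to a linear program *)

Section TwoPoints.
Variables (V : Type) (q : V -> V -> R).
Hypotheses (Hq : forall x y, 0 <= q x y) (Hconn : connected q) (Hrev : reversible q).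
Variables (x0 y0 : V) (NX NY : list V).
Hypotheses (NoDup_NX : NoDup NX) (NoDup_NY : NoDup NY)
  (in_NX : forall x, In x NX <-> 0 < q x0 x /\ x <> x0)
  (in_NY : forall y, In y NY <-> 0 < q y0 y /\ y <> y0).

Definition d0 : nat := dist q x0 y0.

Definition gain (x y : V) : R := INR d0 - INR (dist q x y).

(* Extra gain of sending mass from x to y rather than from x to y0 and from
   x0 to y; it is nonpositive unless the pair (x, y) is profitable. *)
Definition swap_gain (x y : V) : R := gain x y - gain x y0 - gain x0 y.

Definition profitable (x y : V) : bool :=
  Nat.ltb (d0 + dist q x y) (dist q x y0 + dist q x0 y).

(* The variables of the linear program are masses z (x, y); only those on
   profitable pairs of NX x NY are used. *)
Definition on_profitable (z : V * V -> R) (x y : V) : R :=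
  if profitable x y then z (x, y) else 0.

Definition row_mass (z : V * V -> R) (x : V) : R := finsum (fun y => on_profitable z x y) NY.
Definition col_mass (z : V * V -> R) (y : V) : R := finsum (fun x => on_profitable z x y) NX.

Definition completion (z : V * V -> R) (x y : V) : R :=
  if excluded_middle_informative (In x NX /\ In y NY) then on_profitable z x y
  else if excluded_middle_informative (In x NX /\ y = y0) then q x0 x - row_mass z x
  else if excluded_middle_informative (x = x0 /\ In y NY) then q y0 y - col_mass z y
  else 0.

(* Cost of the plan sending everything to y0 and from x0. *)
Definition base_cost : R :=
  finsum (fun x => q x0 x * gain x y0) NX + finsum (fun y => q y0 y * gain x0 y) NY.

Definition SX : list V := x0 :: NX.
Definition SY : list V := y0 :: NY.
Definition support_pairs : list (V * V) := list_prod SX SY.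
Definition lp_pairs : list (V * V) := list_prod NX NY.

Lemma x0_notin_NX : ~ In x0 NX. Proof. intro H; apply in_NX in H; tauto. Qed.
Lemma y0_notin_NY : ~ In y0 NY. Proof. intro H; apply in_NY in H; tauto. Qed.
Lemma NoDup_SX : NoDup SX. Proof. constructor; [apply x0_notin_NX | auto]. Qed.
Lemma NoDup_SY : NoDup SY. Proof. constructor; [apply y0_notin_NY | auto]. Qed.
Lemma NoDup_support_pairs : NoDup support_pairs.
Proof. apply NoDup_prod; [apply NoDup_SX | apply NoDup_SY]. Qed.
Lemma NoDup_lp_pairs : NoDup lp_pairs. Proof. apply NoDup_prod; auto. Qed.

Lemma NX_close x : In x NX -> (dist q x0 x <= 1)%nat /\ (dist q x x0 <= 1)%nat.
Proof.
  intros Hx. apply in_NX in Hx. destruct Hx as [Hx _].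
  split; apply dist_edge; auto. apply rev_pos; auto.
Qed.

Lemma NY_close y : In y NY -> (dist q y0 y <= 1)%nat /\ (dist q y y0 <= 1)%nat.
Proof.
  intros Hy. apply in_NY in Hy. destruct Hy as [Hy _].
  split; apply dist_edge; auto. apply rev_pos; auto.
Qed.

Lemma profitable_off_geodesic x y : profitable x y = true ->
  (d0 < dist q x0 x + dist q x y0)%nat /\ (d0 < dist q x0 y + dist q y y0)%nat.
Proof.
  unfold profitable. intros H. apply Nat.ltb_lt in H.
  assert (T1 := dist_tri q Hconn x0 x y). assert (T2 := dist_tri q Hconn x y y0). lia.
Qed.

Lemma swap_gain_nonpos x y : profitable x y = false -> swap_gain x y <= 0.
Proof.
  intros H. unfold profitable in H. apply Nat.ltb_ge, le_INR in H. rewrite !plus_INR in H.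
  unfold swap_gain, gain. lra.
Qed.

Lemma plan_support rho : transport_plan q x0 y0 rho ->
  forall x y, rho x y <> 0 -> In x SX /\ In y SY.
Proof.
  intros [Hnn [Hr Hc]] x y Hne. split.
  - destruct (classic (In x SX)) as [| Hn]; auto. exfalso.
    assert (Hx : x <> x0) by (intro; subst; apply Hn; left; auto).
    assert (Hq0 : q x0 x = 0).
    { destruct (Rle_lt_dec (q x0 x) 0); [specialize (Hq x0 x); lra |].
      exfalso; apply Hn; right; apply in_NX; auto. }
    assert (H := HasSum_term_le _ _ y (Hr x Hx) (Hnn x)).
    specialize (Hnn x y). lra.
  - destruct (classic (In y SY)) as [| Hn]; auto. exfalso.
    assert (Hy : y <> y0) by (intro; subst; apply Hn; left; auto).
    assert (Hq0 : q y0 y = 0).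
    { destruct (Rle_lt_dec (q y0 y) 0); [specialize (Hq y0 y); lra |].
      exfalso; apply Hn; right; apply in_NY; auto. }
    assert (H := HasSum_term_le _ _ x (Hc y Hy) (fun b => Hnn b y)).
    specialize (Hnn x y). lra.
Qed.

Lemma plan_row_sum rho : transport_plan q x0 y0 rho ->
  forall x, In x NX -> rho x y0 + finsum (rho x) NY = q x0 x.
Proof.
  intros Hp x Hx. assert (Hx0 : x <> x0) by (apply in_NX in Hx; tauto).
  change (rho x y0 + finsum (rho x) NY) with (finsum (rho x) SY).
  symmetry; apply HasSum_finsum_eq; [apply NoDup_SY | | apply (proj1 (proj2 Hp)); auto].
  intros y Hy. destruct (Req_dec (rho x y) 0) as [| Hne]; auto.
  exfalso. apply Hy, (plan_support rho Hp x y Hne).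
Qed.

Lemma plan_col_sum rho : transport_plan q x0 y0 rho ->
  forall y, In y NY -> rho x0 y + finsum (fun x => rho x y) NX = q y0 y.
Proof.
  intros Hp y Hy. assert (Hy0 : y <> y0) by (apply in_NY in Hy; tauto).
  change (rho x0 y + finsum (fun x => rho x y) NX) with (finsum (fun x => rho x y) SX).
  symmetry; apply HasSum_finsum_eq; [apply NoDup_SX | | apply (proj2 (proj2 Hp)); auto].
  intros x Hx. destruct (Req_dec (rho x y) 0) as [| Hne]; auto.
  exfalso. apply Hx, (plan_support rho Hp x y Hne).
Qed.

Lemma plan_cost_finsum rho c : transport_plan q x0 y0 rho ->
  HasSum (cost_family q x0 y0 rho) c -> c = finsum (cost_family q x0 y0 rho) support_pairs.
Proof.
  intros Hp Hs. apply HasSum_finsum_eq; auto; [apply NoDup_support_pairs |].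
  intros [x y] Hn. unfold cost_family; simpl.
  destruct (Req_dec (rho x y) 0) as [E | E]; [rewrite E; ring |].
  exfalso. apply Hn, in_prod_iff, (plan_support rho Hp x y E).
Qed.

Lemma cost_split (rho : V -> V -> R)
  (Hrow : forall x, In x NX -> rho x y0 + finsum (rho x) NY = q x0 x)
  (Hcol : forall y, In y NY -> rho x0 y + finsum (fun x => rho x y) NX = q y0 y) :
  finsum (cost_family q x0 y0 rho) support_pairs =
  base_cost + finsum (fun x => finsum (fun y => rho x y * swap_gain x y) NY) NX.
Proof.
  unfold support_pairs, SX, SY. rewrite finsum_prod. simpl.
  unfold cost_family; simpl. fold d0.
  change (fun b => rho x0 b * (INR d0 - INR (dist q x0 b))) with (fun b => rho x0 b * gain x0 b).
  change (fun a => rho a y0 * (INR d0 - INR (dist q a y0)) +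
                  finsum (fun b => rho a b * (INR d0 - INR (dist q a b))) NY)
    with (fun a => rho a y0 * gain a y0 + finsum (fun b => rho a b * gain a b) NY).
  assert (E1 : finsum (fun y => rho x0 y * gain x0 y) NY =
     finsum (fun y => q y0 y * gain x0 y) NY
     - finsum (fun x => finsum (fun y => rho x y * gain x0 y) NY) NX).
  { rewrite (finsum_comm (fun x y => rho x y * gain x0 y)), <- finsum_minus.
    apply finsum_ext. intros y Hy. rewrite finsum_scal_r, <- (Hcol y Hy). ring. }
  assert (E2 : finsum (fun x => rho x y0 * gain x y0 + finsum (fun y => rho x y * gain x y) NY) NX =
     finsum (fun x => q x0 x * gain x y0) NX
     - finsum (fun x => finsum (fun y => rho x y * gain x y0) NY) NX
     + finsum (fun x => finsum (fun y => rho x y * gain x y) NY) NX).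
  { rewrite <- finsum_minus, <- finsum_plus. apply finsum_ext. intros x Hx.
    rewrite finsum_scal_r, <- (Hrow x Hx). ring. }
  assert (E3 : finsum (fun x => finsum (fun y => rho x y * swap_gain x y) NY) NX =
    finsum (fun x => finsum (fun y => rho x y * gain x y) NY) NX
    - finsum (fun x => finsum (fun y => rho x y * gain x y0) NY) NX
    - finsum (fun x => finsum (fun y => rho x y * gain x0 y) NY) NX).
  { rewrite <- !finsum_minus. apply finsum_ext. intros x _. rewrite <- !finsum_minus.
    apply finsum_ext. intros y _. unfold swap_gain. ring. }
  rewrite E1, E2, E3. unfold base_cost. replace (INR d0 - INR d0) with 0 by ring. ring.
Qed.

Definition mass_bound : R := finsum (q x0) NX.

Definition row_indicator (x : V) (p : V * V) : R :=
  if deq (fst p) x then (if profitable (fst p) (snd p) then 1 else 0) else 0.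
Definition col_indicator (y : V) (p : V * V) : R :=
  if deq (snd p) y then (if profitable (fst p) (snd p) then 1 else 0) else 0.

Definition marginal_constraints : list ((V * V -> R) * R) :=
  map (fun x => (row_indicator x, q x0 x)) NX ++ map (fun y => (col_indicator y, q y0 y)) NY.

Definition lp_objective (p : V * V) : R :=
  if profitable (fst p) (snd p) then swap_gain (fst p) (snd p) else 0.

Definition lp_feasible_mass (z : V * V -> R) : Prop :=
  lin_feasible lp_pairs mass_bound marginal_constraints z.

Lemma row_indicator_sum z x : In x NX ->
  finsum (fun p => row_indicator x p * z p) lp_pairs = row_mass z x.
Proof.
  intros Hx. unfold lp_pairs. rewrite finsum_prod.
  rewrite (finsum_same_support _ NX [x]); auto; [| repeat constructor; intros [] |].
  - simpl. rewrite Rplus_0_r. apply finsum_ext. intros y _.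
    unfold row_indicator, on_profitable; simpl.
    destruct (deq x x); [| congruence]. destruct (profitable x y); ring.
  - intros x' Hne. destruct (deq x' x) as [-> | Hn]; [split; intros _; simpl; auto |].
    exfalso. apply Hne, finsum_zero. intros y _.
    unfold row_indicator; simpl. destruct (deq x' x); [congruence | ring].
Qed.

Lemma col_indicator_sum z y : In y NY ->
  finsum (fun p => col_indicator y p * z p) lp_pairs = col_mass z y.
Proof.
  intros Hy. unfold lp_pairs. rewrite finsum_prod. apply finsum_ext. intros x _.
  rewrite (finsum_same_support _ NY [y]); auto; [| repeat constructor; intros [] |].
  - simpl. rewrite Rplus_0_r. unfold col_indicator, on_profitable; simpl.
    destruct (deq y y); [| congruence]. destruct (profitable x y); ring.
  - intros y' Hne. destruct (deq y' y) as [-> | Hn]; [split; intros _; simpl; auto |].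
    exfalso. apply Hne. unfold col_indicator; simpl. destruct (deq y' y); [congruence | ring].
Qed.

Lemma lp_objective_sum z : finsum (fun p => lp_objective p * z p) lp_pairs =
  finsum (fun x => finsum (fun y => on_profitable z x y * swap_gain x y) NY) NX.
Proof.
  unfold lp_pairs. rewrite finsum_prod. apply finsum_ext. intros x _.
  apply finsum_ext. intros y _. unfold lp_objective, on_profitable; simpl.
  destruct (profitable x y); ring.
Qed.

Lemma feasible_row z : lp_feasible_mass z -> forall x, In x NX -> row_mass z x <= q x0 x.
Proof.
  intros [_ H] x Hx. rewrite <- row_indicator_sum; auto.
  apply (H (row_indicator x, q x0 x)), in_app_iff. left. apply in_map_iff. eauto.
Qed.

Lemma feasible_col z : lp_feasible_mass z -> forall y, In y NY -> col_mass z y <= q y0 y.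
Proof.
  intros [_ H] y Hy. rewrite <- col_indicator_sum; auto.
  apply (H (col_indicator y, q y0 y)), in_app_iff. right. apply in_map_iff. eauto.
Qed.

Lemma completion_pairs z x y : In x NX -> In y NY -> completion z x y = on_profitable z x y.
Proof.
  intros Hx Hy. unfold completion.
  destruct (excluded_middle_informative _); [reflexivity | exfalso; tauto].
Qed.

Lemma completion_to_y0 z x : In x NX -> completion z x y0 = q x0 x - row_mass z x.
Proof.
  intros Hx. unfold completion.
  destruct (excluded_middle_informative _) as [[_ H] | _]; [exfalso; apply y0_notin_NY; auto |].
  destruct (excluded_middle_informative _); [reflexivity | exfalso; tauto].
Qed.

Lemma completion_from_x0 z y : In y NY -> completion z x0 y = q y0 y - col_mass z y.
Proof.
  intros Hy. unfold completion.
  destruct (excluded_middle_informative _) as [[H _] | _]; [exfalso; apply x0_notin_NX; auto |].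
  destruct (excluded_middle_informative _) as [[H _] | _]; [exfalso; apply x0_notin_NX; auto |].
  destruct (excluded_middle_informative _); [reflexivity | exfalso; tauto].
Qed.

Lemma completion_outside z x y : ~ (In x SX /\ In y SY) -> completion z x y = 0.
Proof.
  intros Hn. unfold completion, SX, SY in *; simpl in *.
  repeat (destruct (excluded_middle_informative _) as [[] | _];
          [exfalso; apply Hn; subst; split; auto |]).
  reflexivity.
Qed.

Lemma completion_nonneg z : lp_feasible_mass z -> forall x y, 0 <= completion z x y.
Proof.
  intros Hf x y. unfold completion.
  destruct (excluded_middle_informative _) as [[Hx Hy] | _].
  { unfold on_profitable. destruct (profitable x y); [| lra].
    apply (proj1 Hf (x, y)), in_prod; auto. }
  destruct (excluded_middle_informative _) as [[Hx _] | _].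
  { assert (H := feasible_row z Hf x Hx); lra. }
  destruct (excluded_middle_informative _) as [[_ Hy] | _].
  { assert (H := feasible_col z Hf y Hy); lra. }
  lra.
Qed.

Lemma completion_row z x : In x NX -> completion z x y0 + finsum (completion z x) NY = q x0 x.
Proof.
  intros Hx. rewrite completion_to_y0 by auto.
  rewrite (finsum_ext _ (fun y => on_profitable z x y)) by (intros; apply completion_pairs; auto).
  unfold row_mass; ring.
Qed.

Lemma completion_col z y : In y NY ->
  completion z x0 y + finsum (fun x => completion z x y) NX = q y0 y.
Proof.
  intros Hy. rewrite completion_from_x0 by auto.
  rewrite (finsum_ext _ (fun x => on_profitable z x y)) by (intros; apply completion_pairs; auto).
  unfold col_mass; ring.
Qed.

Lemma completion_plan z : lp_feasible_mass z -> transport_plan q x0 y0 (completion z).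
Proof.
  intros Hf. split; [apply completion_nonneg; auto | split].
  - intros x Hx0. destruct (classic (In x NX)) as [Hx | Hx].
    + rewrite <- (completion_row z x Hx).
      change (completion z x y0 + finsum (completion z x) NY) with (finsum (completion z x) SY).
      apply HasSum_finsum; [apply NoDup_SY |].
      intros y Hy. apply completion_outside. tauto.
    + assert (E : q x0 x = 0).
      { destruct (Rle_lt_dec (q x0 x) 0); [specialize (Hq x0 x); lra |].
        exfalso; apply Hx, in_NX; auto. }
      rewrite E. apply HasSum_zero. intros y. apply completion_outside. intros [[H | H] _]; auto.
  - intros y Hy0. destruct (classic (In y NY)) as [Hy | Hy].
    + rewrite <- (completion_col z y Hy).
      change (completion z x0 y + finsum (fun x => completion z x y) NX)
        with (finsum (fun x => completion z x y) SX).
      apply HasSum_finsum; [apply NoDup_SX |].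
      intros x Hx. apply completion_outside. tauto.
    + assert (E : q y0 y = 0).
      { destruct (Rle_lt_dec (q y0 y) 0); [specialize (Hq y0 y); lra |].
        exfalso; apply Hy, in_NY; auto. }
      rewrite E. apply HasSum_zero. intros x. apply completion_outside. intros [_ [H | H]]; auto.
Qed.

Lemma completion_cost z : lp_feasible_mass z ->
  HasSum (cost_family q x0 y0 (completion z))
    (base_cost + finsum (fun p => lp_objective p * z p) lp_pairs).
Proof.
  intros Hf. rewrite lp_objective_sum.
  rewrite (finsum_ext _ (fun x => finsum (fun y => completion z x y * swap_gain x y) NY)).
  2:{ intros x Hx. apply finsum_ext. intros y Hy. rewrite completion_pairs; auto. }
  rewrite <- cost_split by (intros; first [apply completion_row | apply completion_col]; auto).
  apply HasSum_finsum; [apply NoDup_support_pairs |].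
  intros [x y] Hn. unfold cost_family; simpl. rewrite completion_outside; [ring |].
  intros H. apply Hn, in_prod; tauto.
Qed.

(** Every plan is dominated by the completion of its profitable part. *)

Definition as_mass (rho : V -> V -> R) (p : V * V) : R := rho (fst p) (snd p).

Lemma plan_feasible rho : transport_plan q x0 y0 rho -> lp_feasible_mass (as_mass rho).
Proof.
  intros Hp. assert (Hnn := proj1 Hp).
  assert (Hon : forall x y, on_profitable (as_mass rho) x y <= rho x y).
  { intros x y. unfold on_profitable, as_mass; simpl. destruct (profitable x y); [lra | apply Hnn]. }
  split.
  - intros [x y] Hxy'. apply in_prod_iff in Hxy'. destruct Hxy' as [Hx Hy].
    unfold as_mass; simpl. split; [apply Hnn |].
    assert (A1 : rho x y <= finsum (rho x) NY) by (apply finsum_ge_term; auto).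
    assert (A2 := plan_row_sum rho Hp x Hx). assert (A3 := Hnn x y0).
    assert (A4 : q x0 x <= mass_bound) by (apply finsum_ge_term; auto).
    lra.
  - intros p Hp'. apply in_app_iff in Hp'.
    destruct Hp' as [Hp' | Hp']; apply in_map_iff in Hp'; destruct Hp' as [v [<- Hv]]; simpl.
    + rewrite row_indicator_sum; auto. unfold row_mass.
      assert (A1 : finsum (fun y => on_profitable (as_mass rho) v y) NY <= finsum (rho v) NY)
        by (apply finsum_le; auto).
      assert (A2 := plan_row_sum rho Hp v Hv). assert (A3 := Hnn v y0). lra.
    + rewrite col_indicator_sum; auto. unfold col_mass.
      assert (A1 : finsum (fun x => on_profitable (as_mass rho) x v) NX <= finsum (fun x => rho x v) NX)
        by (apply finsum_le; auto).
      assert (A2 := plan_col_sum rho Hp v Hv). assert (A3 := Hnn x0 v). lra.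
Qed.

Lemma plan_cost_bound rho c : transport_plan q x0 y0 rho ->
  HasSum (cost_family q x0 y0 rho) c ->
  c <= base_cost + finsum (fun p => lp_objective p * as_mass rho p) lp_pairs.
Proof.
  intros Hp Hs. rewrite (plan_cost_finsum rho c Hp Hs), cost_split, lp_objective_sum
    by (auto using plan_row_sum, plan_col_sum).
  apply Rplus_le_compat_l, finsum_le. intros x _. apply finsum_le. intros y _.
  unfold on_profitable, as_mass; simpl. destruct (profitable x y) eqn:G; [lra |].
  assert (W := swap_gain_nonpos x y G). assert (N := proj1 Hp x y).
  assert (0 <= rho x y * - swap_gain x y) by (apply Rmult_le_pos; lra). lra.
Qed.

Lemma exists_optimal_completion :
  exists z, lp_feasible_mass z /\ optimal_plan q x0 y0 (completion z).
Proof.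
  assert (F0 : lp_feasible_mass (fun _ => 0)).
  { split.
    - intros a _. split; [lra |]. apply finsum_nonneg. auto.
    - intros p Hp. rewrite finsum_zero by (intros; ring). apply in_app_iff in Hp.
      destruct Hp as [Hp | Hp]; apply in_map_iff in Hp; destruct Hp as [v [<- _]]; simpl; auto. }
  destruct (lp_max_list lp_pairs (x0, y0) NoDup_lp_pairs mass_bound marginal_constraints
              lp_objective _ F0) as [z [Hz Hopt]].
  exists z. split; auto. split; [apply completion_plan; auto |].
  eexists. split; [apply completion_cost; auto |].
  intros rho' c' Hp Hs. eapply Rle_trans; [apply (plan_cost_bound rho' c' Hp Hs) |].
  apply Rplus_le_compat_l, Hopt, plan_feasible; auto.
Qed.

Lemma completion_near z x y : completion z x y <> 0 ->
  (d0 <= dist q x y + 1)%nat /\ (dist q x y <= d0 + 1)%nat.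
Proof.
  unfold completion, d0. intros Hne.
  destruct (excluded_middle_informative _) as [[Hx Hy] | _].
  - unfold on_profitable in Hne. destruct (profitable x y) eqn:G; [| lra].
    unfold profitable, d0 in G. apply Nat.ltb_lt in G.
    destruct (NX_close x Hx). destruct (NY_close y Hy).
    assert (T1 := dist_tri q Hconn x x0 y0). assert (T2 := dist_tri q Hconn x0 y0 y).
    assert (T3 := dist_tri q Hconn x y y0). assert (T4 := dist_tri q Hconn x0 x y). lia.
  - destruct (excluded_middle_informative _) as [[Hx ->] | _].
    + destruct (NX_close x Hx).
      assert (T1 := dist_tri q Hconn x0 x y0). assert (T2 := dist_tri q Hconn x x0 y0). lia.
    + destruct (excluded_middle_informative _) as [[-> Hy] | _]; [| lra].
      destruct (NY_close y Hy).
      assert (T1 := dist_tri q Hconn x0 y y0). assert (T2 := dist_tri q Hconn x0 y0 y). lia.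
Qed.

Lemma completion_short_moves z k : (Z.abs k > 1)%Z ->
  HasSum (mu_family q x0 y0 (completion z) k) 0.
Proof.
  intros Hk. apply HasSum_zero. intros [x y]. unfold mu_family; simpl.
  destruct (Z.eq_dec _ _) as [E |]; auto.
  destruct (Req_dec (completion z x y) 0) as [| Hne]; auto.
  destruct (completion_near z x y Hne). unfold d0 in *. lia.
Qed.

(* A neighbour x1 of x0 on a geodesic to y0 is in no profitable pair, so the
   completion sends its whole mass q(x0,x1) to y0, at distance d0 - 1; and
   symmetrically for a neighbour y1 of y0 on a geodesic to x0. *)
Lemma completion_mu_minus_one z : x0 <> y0 -> lp_feasible_mass z ->
  exists s, HasSum (mu_family q x0 y0 (completion z) (-1)%Z) s /\ 2 * qmin q <= s.
Proof.
  intros Hxy Hf. set (mu := mu_family q x0 y0 (completion z) (-1)%Z).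
  destruct (dist q x0 y0) as [| k] eqn:Ed; [exfalso; exact (Hxy (dist_eq0 q Hconn _ _ Ed)) |].
  destruct (dist_step q Hconn x0 y0 k Ed) as [x1 [Hx1 Dx1]].
  assert (Ed' : dist q y0 x0 = S k) by (rewrite <- (dist_sym q Hconn Hq Hrev); auto).
  destruct (dist_step q Hconn y0 x0 k Ed') as [y1 [Hy1 Dy1]].
  rewrite (dist_sym q Hconn Hq Hrev) in Dy1.
  assert (Ix : In x1 NX) by (apply in_NX; split; auto; intro E; rewrite E in Dx1; lia).
  assert (Iy : In y1 NY) by (apply in_NY; split; auto; intro E; rewrite E in Dy1; lia).
  assert (R1 : row_mass z x1 = 0).
  { apply finsum_zero. intros y _. unfold on_profitable.
    destruct (profitable x1 y) eqn:G; auto.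
    destruct (profitable_off_geodesic x1 y G). destruct (NX_close x1 Ix). unfold d0 in *. lia. }
  assert (R2 : col_mass z y1 = 0).
  { apply finsum_zero. intros x _. unfold on_profitable.
    destruct (profitable x y1) eqn:G; auto.
    destruct (profitable_off_geodesic x y1 G). destruct (NY_close y1 Iy). unfold d0 in *. lia. }
  assert (M1 : mu (x1, y0) = q x0 x1).
  { unfold mu, mu_family; simpl. destruct (Z.eq_dec _ _) as [| E].
    - rewrite completion_to_y0, R1; auto; ring.
    - exfalso. apply E. rewrite Dx1, Ed. lia. }
  assert (M2 : mu (x0, y1) = q y0 y1).
  { unfold mu, mu_family; simpl. destruct (Z.eq_dec _ _) as [| E].
    - rewrite completion_from_x0, R2; auto; ring.
    - exfalso. apply E. rewrite Dy1, Ed. lia. }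
  exists (finsum mu support_pairs). split.
  { apply HasSum_finsum; [apply NoDup_support_pairs |]. intros [x y] Hn.
    unfold mu, mu_family; simpl. destruct (Z.eq_dec _ _); auto.
    apply completion_outside. intros H; apply Hn, in_prod; tauto. }
  assert (Hsum : mu (x1, y0) + mu (x0, y1) <= finsum mu support_pairs).
  { apply finsum_ge_two; [apply NoDup_support_pairs | | | |].
    - apply in_prod; [right; exact Ix | left; reflexivity].
    - apply in_prod; [left; reflexivity | right; exact Iy].
    - intros E. inversion E. subst. exact (x0_notin_NX Ix).
    - intros [a b] _. unfold mu, mu_family; simpl.
      destruct (Z.eq_dec _ _); [apply completion_nonneg; auto | lra]. }
  assert (Q1 := qmin_le q x0 x1 Hx1). assert (Q2 := qmin_le q y0 y1 Hy1). lra.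
Qed.

Lemma short_optimal_plan : x0 <> y0 ->
  exists rho, optimal_plan q x0 y0 rho /\
    (forall k : Z, (Z.abs k > 1)%Z -> HasSum (mu_family q x0 y0 rho k) 0) /\
    (exists s, HasSum (mu_family q x0 y0 rho (-1)%Z) s /\ 2 * qmin q <= s).
Proof.
  intros Hxy. destruct exists_optimal_completion as [z [Hf Hopt]].
  exists (completion z). split; [| split]; auto.
  - intros k; apply completion_short_moves.
  - apply completion_mu_minus_one; auto.
Qed.

End TwoPoints.

(** * Transport from a vertex to itself *)

Section SelfTransport.
Variables (V : Type) (q : V -> V -> R).
Hypotheses (Hq : forall x y, 0 <= q x y) (Hconn : connected q).
Variable x0 : V.

Definition diagonal_plan (x y : V) : R := if deq x y then q x0 x else 0.

Lemma diagonal_plan_transport : transport_plan q x0 x0 diagonal_plan.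
Proof.
  assert (Hdiag : forall x, finsum (diagonal_plan x) [x] = q x0 x).
  { intros x. simpl. unfold diagonal_plan. destruct (deq x x); [ring | congruence]. }
  split; [| split].
  - intros x y. unfold diagonal_plan. destruct (deq x y); auto; lra.
  - intros x _. rewrite <- Hdiag. apply HasSum_finsum; [repeat constructor; intros [] |].
    intros y Hy. unfold diagonal_plan. destruct (deq x y); auto.
    subst; exfalso; apply Hy; left; auto.
  - intros y _. rewrite <- Hdiag. change (finsum (diagonal_plan y) [y]) with
      (finsum (fun x => diagonal_plan x y) [y]).
    apply HasSum_finsum; [repeat constructor; intros [] |].
    intros x Hx. unfold diagonal_plan. destruct (deq x y); auto.
    subst; exfalso; apply Hx; left; auto.
Qed.

Lemma diagonal_plan_cost : HasSum (cost_family q x0 x0 diagonal_plan) 0.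
Proof.
  apply HasSum_zero. intros [x y]. unfold cost_family, diagonal_plan; simpl.
  destruct (deq x y); [subst; rewrite !(dist_refl q Hconn); ring | ring].
Qed.

(* Every term of the cost is nonpositive and the optimal cost is at least
   that of the diagonal plan, so an optimal plan moves no mass at all. *)
Lemma self_optimal_no_move rho : optimal_plan q x0 x0 rho ->
  forall k : Z, k <> 0%Z -> HasSum (mu_family q x0 x0 rho k) 0.
Proof.
  intros [Hp [c [Hc Hopt]]] k Hk.
  assert (Hc0 := Hopt _ _ diagonal_plan_transport diagonal_plan_cost).
  assert (Hterm : forall x y, rho x y * INR (dist q x y) <= 0).
  { intros x y. assert (H : c <= cost_family q x0 x0 rho (x, y)).
    { apply HasSum_le_term; auto. intros [a b]. unfold cost_family; simpl.
      rewrite (dist_refl q Hconn). simpl.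
      assert (0 <= rho a b * INR (dist q a b)) by (apply Rmult_le_pos; [apply Hp | apply pos_INR]).
      lra. }
    unfold cost_family in H; simpl in H. rewrite (dist_refl q Hconn) in H. simpl in H. lra. }
  apply HasSum_zero. intros [x y]. unfold mu_family; simpl.
  destruct (Z.eq_dec _ _) as [E |]; auto.
  rewrite (dist_refl q Hconn) in E.
  assert (Hd : 0 < INR (dist q x y)) by (apply lt_0_INR; lia).
  assert (H1 := Hterm x y). assert (H2 := proj1 Hp x y). nra.
Qed.

End SelfTransport.

Theorem mainTheorem1 (V : Type) (q : V -> V -> R)
  (HV : exists e : V -> nat, forall a b, e a = e b -> a = b)
  (Hq : forall x y, 0 <= q x y)
  (Hfin : forall x, exists l : list V, forall y, 0 < q x y -> In y l)
  (Hrev : reversible q)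
  (Hconn : connected q) :
  (forall x0 y0 : V, x0 <> y0 ->
     exists rho, optimal_plan q x0 y0 rho /\
       (forall k : Z, (Z.abs k > 1)%Z -> HasSum (mu_family q x0 y0 rho k) 0) /\
       (exists s, HasSum (mu_family q x0 y0 rho (-1)%Z) s /\ 2 * qmin q <= s)) /\
  (forall (x0 : V) (rho : V -> V -> R), optimal_plan q x0 x0 rho ->
     forall k : Z, k <> 0%Z -> HasSum (mu_family q x0 x0 rho k) 0).
Proof.
  split.
  - intros x0 y0 Hxy.
    destruct (neighbour_list q Hfin x0) as [NX [NoDup_NX in_NX]].
    destruct (neighbour_list q Hfin y0) as [NY [NoDup_NY in_NY]].
    exact (short_optimal_plan V q Hq Hconn Hrev x0 y0 NX NY NoDup_NX NoDup_NY in_NX in_NY Hxy).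
  - exact (self_optimal_no_move V q Hq Hconn).
Qed.
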